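(* If $\dot\Sigma^*/{\dot\sim_{\mathrm{REL}_{\ge 5}}}$ is finite, then $\mathbf{T}^{\{\cap,\cdot,\mathrm{I},\mathrm{D}\}}_{\le 1}/{\sim_{\mathrm{REL}}}$ is finite.
   Context: Fix a non-empty finite set $V$ of variables. Consider CoR terms over the operations $\cap$ (binary), $\cdot$ (binary), constants $\mathrm{I},\mathrm{D}$ and converse $\smile$ (unary), interpreted in a structure $M$ (a non-empty set $|M|$ with a binary relation $a^M\subseteq|M|^2$ for each $a\in V$) by $[\![a]\!]_M=a^M$, $\cap$ as intersection, $[\![\mathrm{I}]\!]_M=\{(x,y):x=y\}$, $[\![\mathrm{D}]\!]_M=\{(x,y):x\ne y\}$, $R\cdot S=\{(x,y):\exists z,(x,z)\in R\wedge(z,y)\in S\}$, $R^{\smile}=\{(x,y):(y,x)\in R\}$. $\mathbf{T}^{\{\cap,\cdot,\mathrm{I},\mathrm{D}\}}$ is the set of such terms not using $\smile$; $\mathrm{vo}(t)$ is the number of occurrences of variables in $t$, and $S_{\le k}=\{t\in S:\mathrm{vo}(t)\le k\}$. For a class $\mathcal{C}$ of structures, $t\sim_{\mathcal{C}}s$ iff $[\![t]\!]_M=[\![s]\!]_M$ for all $M\in\mathcal{C}$; $\mathrm{REL}$ is the class of all structures and $\mathrm{REL}_{\ge 5}$ those with at least $5$ elements. $\dot\Sigma$ is the set of characters $(\_\cap t)$, $(t\cap\_)$, $(\_\cdot t)$, $(t\cdot\_)$ for all variable-free terms $t$ over $\{\cap,\cdot,\mathrm{I},\mathrm{D},\smile\}$,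 together with the character $\smile$. For $w\in\dot\Sigma^*$ and a term $t$, $w[t]$ is defined by $\varepsilon[t]=t$, $((\_\cap s)w')[t]=w'[t]\cap s$, $((s\cap\_)w')[t]=s\cap w'[t]$, $((\_\cdot s)w')[t]=w'[t]\cdot s$, $((s\cdot\_)w')[t]=s\cdot w'[t]$, $(\smile w')[t]=(w'[t])^{\smile}$. $w\ \dot\sim_{\mathrm{REL}_{\ge5}}\ w'$ iff $w[a]\sim_{\mathrm{REL}_{\ge 5}}w'[a]$ for any variable $a\in V$. *)

From Stdlib Require Import List.
Import ListNotations.

Section Defs.
Variable V : Type.

Inductive term : Type :=
| Var  : V -> term
| Cap  : term -> term -> term
| Comp : term -> term -> term
| IdT  : term
| DiT  : term
| Conv : term -> term.

Record structure : Type := {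
  carrier : Type;
  carrier_inhabited : inhabited carrier;
  rel : V -> carrier -> carrier -> Prop }.

Fixpoint sem (M : structure) (t : term) : carrier M -> carrier M -> Prop :=
  match t with
  | Var a => rel M a
  | Cap t1 t2 => fun x y => sem M t1 x y /\ sem M t2 x y
  | Comp t1 t2 => fun x y => exists z, sem M t1 x z /\ sem M t2 z y
  | IdT => fun x y => x = y
  | DiT => fun x y => x <> y
  | Conv t1 => fun x y => sem M t1 y x
  end.

Definition sim (C : structure -> Prop) (t s : term) : Prop :=
  forall M, C M -> forall x y, sem M t x y <-> sem M s x y.

Definition REL (M : structure) : Prop := True.

Definition REL_ge5 (M : structure) : Prop :=
  exists l : list (carrier M), length l = 5 /\ NoDup l.

Fixpoint vo (t : term) : nat :=
  match t with
  | Var _ => 1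
  | Cap t1 t2 | Comp t1 t2 => vo t1 + vo t2
  | IdT | DiT => 0
  | Conv t1 => vo t1
  end.

Fixpoint var_free (t : term) : Prop :=
  match t with
  | Var _ => False
  | Cap t1 t2 | Comp t1 t2 => var_free t1 /\ var_free t2
  | IdT | DiT => True
  | Conv t1 => var_free t1
  end.

Fixpoint conv_free (t : term) : Prop :=
  match t with
  | Var _ | IdT | DiT => True
  | Cap t1 t2 | Comp t1 t2 => conv_free t1 /\ conv_free t2
  | Conv _ => False
  end.

(* characters of Sigma-dot: (_ cap t), (t cap _), (_ . t), (t . _), converse *)
Inductive char : Type :=
| CapR  : term -> char
| CapL  : term -> char
| CompR : term -> char
| CompL : term -> char
| ConvC : char.

(* a character belongs to Sigma-dot iff its embedded term is variable-free *)
Definition char_ok (c : char) : Prop :=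
  match c with
  | CapR t | CapL t | CompR t | CompL t => var_free t
  | ConvC => True
  end.

Definition word_ok (w : list char) : Prop := Forall char_ok w.

Fixpoint plug (w : list char) (t : term) : term :=
  match w with
  | [] => t
  | CapR s :: w' => Cap (plug w' t) s
  | CapL s :: w' => Cap s (plug w' t)
  | CompR s :: w' => Comp (plug w' t) s
  | CompL s :: w' => Comp s (plug w' t)
  | ConvC :: w' => Conv (plug w' t)
  end.

Definition wsim_ge5 (w w' : list char) : Prop :=
  forall a : V, sim REL_ge5 (plug w (Var a)) (plug w' (Var a)).

(* the quotient of {x | P x} by R is finite:
   finitely many representatives in P cover every element of P up to R *)
Definition finite_quotient {X : Type} (P : X -> Prop) (R : X -> X -> Prop) : Prop :=
  exists reps : list X, Forall P reps /\
    forall x, P x -> exists r, In r reps /\ R x r.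

End Defs.

Arguments Var {V}. Arguments Cap {V}. Arguments Comp {V}. Arguments IdT {V}.
Arguments DiT {V}. Arguments Conv {V}. Arguments ConvC {V}.

(* Split the structures into those with at least five elements and the smaller
   ones.  On the large ones a term with one variable occurrence is w[a] for a
   word w, hence equivalent to r[a] for one of the finitely many representative
   words r, and a variable-free term is determined by whether it contains the
   diagonal and the off-diagonal.  The small structures are, up to isomorphism,
   finitely many structures on {0, ..., m} with m < 4.  So the REL-class of a
   term is determined by its truth values on finitely many tests. *)

From Stdlib Require Import List Arith Bool Lia Classical.
Import ListNotations.

Arguments carrier {V}. Arguments rel {V}. Arguments sem {V}. Arguments plug {V}.
Arguments vo {V}. Arguments var_free {V}. Arguments word_ok {V}. Arguments sim {V}.
Arguments CapR {V}. Arguments CapL {V}. Arguments CompR {V}. Arguments CompL {V}.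
Arguments REL_ge5 {V}. Arguments wsim_ge5 {V}.

Definition agree {X : Type} (L : list (X -> Prop)) (x y : X) : Prop :=
  forall Q, In Q L -> (Q x <-> Q y).

Lemma agree_app_l {X : Type} (L1 L2 : list (X -> Prop)) (x y : X) :
  agree (L1 ++ L2) x y -> agree L1 x y.
Proof. intros H Q HQ. apply H, in_or_app; auto. Qed.

Lemma agree_app_r {X : Type} (L1 L2 : list (X -> Prop)) (x y : X) :
  agree (L1 ++ L2) x y -> agree L2 x y.
Proof. intros H Q HQ. apply H, in_or_app; auto. Qed.

Lemma agree_classes {X : Type} (L : list (X -> Prop)) (P : X -> Prop) :
  exists reps, Forall P reps /\ forall x, P x -> exists r, In r reps /\ agree L x r.
Proof.
  revert P; induction L as [|Q L IH]; intros P.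
  - destruct (classic (exists x, P x)) as [[x Px]|HnP].
    + exists [x]. split; [auto|].
      intros y _. exists x. split; [left; reflexivity|intros _ []].
    + exists []. split; [constructor|]. intros x Px. exfalso; eauto.
  - destruct (IH (fun x => P x /\ Q x)) as [reps1 [HP1 Hc1]].
    destruct (IH (fun x => P x /\ ~ Q x)) as [reps2 [HP2 Hc2]].
    rewrite Forall_forall in HP1, HP2.
    exists (reps1 ++ reps2). split.
    + apply Forall_forall. intros r Hr.
      apply in_app_or in Hr as [Hr|Hr]; [apply HP1 | apply HP2]; exact Hr.
    + intros x Px. destruct (classic (Q x)) as [Qx|nQx].
      * destruct (Hc1 x (conj Px Qx)) as [r [Hr Hxr]].
        exists r. split; [apply in_or_app; left; exact Hr|].
        intros Q' [<-|HQ']; [specialize (HP1 r Hr); tauto|auto].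
      * destruct (Hc2 x (conj Px nQx)) as [r [Hr Hxr]].
        exists r. split; [apply in_or_app; right; exact Hr|].
        intros Q' [<-|HQ']; [specialize (HP2 r Hr); tauto|auto].
Qed.

Lemma finite_quotient_of_agree {X : Type} (P : X -> Prop) (R : X -> X -> Prop)
    (L : list (X -> Prop)) :
  (forall x y, P x -> P y -> agree L x y -> R x y) -> finite_quotient P R.
Proof.
  intros HR. destruct (agree_classes L P) as [reps [HP Hc]].
  exists reps. split; [exact HP|]. intros x Px.
  destruct (Hc x Px) as [r [Hr Hxr]]. exists r. split; [exact Hr|].
  rewrite Forall_forall in HP. apply HR; auto.
Qed.

Lemma agree_cover {X : Type} (R : X -> X -> Prop) (P : X -> Prop) (U : list X) :
  (forall x y u, R x u -> R y u -> R x y) ->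
  (forall x, P x -> exists u, In u U /\ R x u) ->
  forall x y, P x -> agree (map (fun u x => R x u) U) x y -> R x y.
Proof.
  intros Heucl Hcov x y Px Hag. destruct (Hcov x Px) as [u [Hu Hxu]].
  apply (Heucl x y u Hxu).
  exact (proj1 (Hag _ (in_map (fun u x => R x u) U u Hu)) Hxu).
Qed.

Section Terms.
Variable V : Type.

Lemma sim_euclid (C : structure V -> Prop) (t s u : term V) :
  sim C t u -> sim C s u -> sim C t s.
Proof. intros Htu Hsu M HM x y. rewrite (Htu M HM), (Hsu M HM). reflexivity. Qed.

Lemma var_free_of_vo0 (t : term V) : vo t = 0 -> var_free t.
Proof.
  induction t; simpl; intros; try tauto; try lia.
  all: split; [apply IHt1 | apply IHt2]; lia.
Qed.

Lemma plug_of_vo1 (t : term V) : vo t = 1 -> exists w a, word_ok w /\ t = plug w (Var a).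
Proof.
  induction t as [b|t1 IH1 t2 IH2|t1 IH1 t2 IH2| | |t1 IH1]; simpl; intros Hv; try lia.
  - exists [], b. split; [constructor|reflexivity].
  - destruct (Nat.eq_dec (vo t1) 0) as [E|E].
    + destruct IH2 as [w [a [Hw ->]]]; [lia|].
      exists (CapL t1 :: w), a. split; [|reflexivity].
      constructor; [apply var_free_of_vo0, E|exact Hw].
    + destruct IH1 as [w [a [Hw ->]]]; [lia|].
      exists (CapR t2 :: w), a. split; [|reflexivity].
      constructor; [apply var_free_of_vo0; lia|exact Hw].
  - destruct (Nat.eq_dec (vo t1) 0) as [E|E].
    + destruct IH2 as [w [a [Hw ->]]]; [lia|].
      exists (CompL t1 :: w), a. split; [|reflexivity].
      constructor; [apply var_free_of_vo0, E|exact Hw].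
    + destruct IH1 as [w [a [Hw ->]]]; [lia|].
      exists (CompR t2 :: w), a. split; [|reflexivity].
      constructor; [apply var_free_of_vo0; lia|exact Hw].
  - destruct (IH1 Hv) as [w [a [Hw ->]]].
    exists (ConvC :: w), a. split; [constructor; [exact I|exact Hw]|reflexivity].
Qed.

(* [shape t] = (t contains the diagonal, t contains the off-diagonal), computed
   as if [t] were variable-free and interpreted on at least three points. *)
Fixpoint shape (t : term V) : bool * bool :=
  match t with
  | Var _ => (false, false)
  | Cap t1 t2 =>
      let (i1, d1) := shape t1 in let (i2, d2) := shape t2 in (i1 && i2, d1 && d2)
  | Comp t1 t2 =>
      let (i1, d1) := shape t1 in let (i2, d2) := shape t2 in
      ((i1 && i2) || (d1 && d2), (i1 && d2) || (d1 && i2) || (d1 && d2))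
  | IdT => (true, false)
  | DiT => (false, true)
  | Conv t1 => shape t1
  end.

Definition shape_holds {X : Type} (p : bool * bool) (x y : X) : Prop :=
  (x = y /\ fst p = true) \/ (x <> y /\ snd p = true).

Lemma sem_var_free (M : structure V) :
  (forall x y : carrier M, exists z, z <> x /\ z <> y) ->
  forall t, var_free t -> forall x y, sem M t x y <-> shape_holds (shape t) x y.
Proof.
  intros Havoid t. unfold shape_holds.
  induction t as [|t1 IH1 t2 IH2|t1 IH1 t2 IH2| | |t1 IH1]; simpl; intros Hf x y;
    try contradiction.
  - destruct Hf as [F1 F2]. rewrite IH1, IH2 by auto.
    destruct (shape t1) as [i1 d1], (shape t2) as [i2 d2].
    destruct i1, d1, i2, d2; simpl; intuition congruence.
  - destruct Hf as [F1 F2].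
    setoid_rewrite IH1; [|exact F1]. setoid_rewrite IH2; [|exact F2].
    destruct (shape t1) as [i1 d1], (shape t2) as [i2 d2]; simpl.
    split.
    + intros [z Hz]. destruct (classic (x = y)); [left|right]; split; auto;
        destruct i1, i2, d1, d2; simpl in *; intuition congruence.
    + intros Hxy. destruct i1, i2, d1, d2; simpl in Hxy;
        first [ exists x; intuition congruence
              | exists y; intuition congruence
              | destruct (Havoid x y) as [z [Hzx Hzy]]; exists z; intuition congruence ].
  - intuition congruence.
  - intuition congruence.
  - rewrite IH1 by exact Hf. intuition congruence.
Qed.

Definition shape_term (p : bool * bool) : term V :=
  match p with
  | (true, true) => Comp DiT DiT
  | (true, false) => IdT
  | (false, true) => DiT
  | (false, false) => Cap IdT DiT
  end.

Lemma shape_term_var_free (p : bool * bool) : var_free (shape_term p).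
Proof. destruct p as [[|] [|]]; simpl; tauto. Qed.

Lemma shape_shape_term (p : bool * bool) : shape (shape_term p) = p.
Proof. destruct p as [[|] [|]]; reflexivity. Qed.

Lemma REL_ge5_avoid (M : structure V) :
  REL_ge5 M -> forall x y : carrier M, exists z, z <> x /\ z <> y.
Proof.
  intros [l [Hl Hnd]] x y. apply NNPP. intros Hno.
  assert (Hxy : forall z, z = x \/ z = y).
  { intros z. apply NNPP. intros Hz. apply Hno. exists z. tauto. }
  destruct l as [|e1 [|e2 [|e3 l]]]; simpl in Hl; try lia.
  inversion Hnd as [|? ? N1 Hnd1]; subst. inversion Hnd1 as [|? ? N2 _]; subst.
  simpl in N1, N2.
  destruct (Hxy e1), (Hxy e2), (Hxy e3); subst; intuition congruence.
Qed.

Lemma sim_shape_term (t : term V) : var_free t -> sim REL_ge5 t (shape_term (shape t)).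
Proof.
  intros Ht M HM x y. pose proof (REL_ge5_avoid M HM) as Havoid.
  rewrite (sem_var_free M Havoid t Ht), (sem_var_free M Havoid _ (shape_term_var_free _)).
  rewrite shape_shape_term. reflexivity.
Qed.

Definition ge5_reps (Vl : list V) (W : list (list (char V))) : list (term V) :=
  map shape_term [(true, true); (true, false); (false, true); (false, false)]
  ++ flat_map (fun r => map (fun a => plug r (Var a)) Vl) W.

Lemma ge5_reps_cover (Vl : list V) (W : list (list (char V))) :
  (forall a, In a Vl) ->
  (forall w, word_ok w -> exists r, In r W /\ wsim_ge5 w r) ->
  forall t, vo t <= 1 -> exists u, In u (ge5_reps Vl W) /\ sim REL_ge5 t u.
Proof.
  intros HVl HW t Ht. unfold ge5_reps.
  destruct (Nat.eq_dec (vo t) 0) as [E|E].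
  - exists (shape_term (shape t)). split.
    + apply in_or_app. left. apply in_map.
      destruct (shape t) as [[|] [|]]; simpl; tauto.
    + apply sim_shape_term, var_free_of_vo0, E.
  - destruct (plug_of_vo1 t) as [w [a [Hw ->]]]; [lia|].
    destruct (HW w Hw) as [r [Hr Hwr]].
    exists (plug r (Var a)). split; [|apply Hwr].
    apply in_or_app. right. apply in_flat_map. exists r. split; [exact Hr|].
    apply (in_map (fun a => plug r (Var a))), HVl.
Qed.

Definition iso (N M : structure V) (f : carrier N -> carrier M) : Prop :=
  (forall x y, f x = f y -> x = y) /\ (forall x', exists x, f x = x') /\
  (forall b x y, rel N b x y <-> rel M b (f x) (f y)).

Lemma sem_iso (N M : structure V) (f : carrier N -> carrier M) :
  iso N M f -> forall t x y, sem N t x y <-> sem M t (f x) (f y).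
Proof.
  intros [Hinj [Hsurj Hrel]] t.
  induction t as [b|t1 IH1 t2 IH2|t1 IH1 t2 IH2| | |t1 IH1]; simpl; intros x y.
  - apply Hrel.
  - rewrite IH1, IH2. reflexivity.
  - split.
    + intros [z [H1 H2]]. exists (f z). rewrite <- IH1, <- IH2. auto.
    + intros [z' [H1 H2]]. destruct (Hsurj z') as [z <-].
      exists z. rewrite IH1, IH2. auto.
  - split; [intros ->; reflexivity|apply Hinj].
  - split; intros Hne Heq; apply Hne; [apply Hinj, Heq|rewrite Heq; reflexivity].
  - apply IH1.
Qed.

Definition graph_structure (m : nat) (E : list (V * nat * nat)) : structure V :=
  {| carrier := {k : nat | k < S m};
     carrier_inhabited := inhabits (exist _ 0 (Nat.lt_0_succ m));
     rel := fun b x y => In (b, proj1_sig x, proj1_sig y) E |}.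

Definition triples (Vl : list V) (m : nat) : list (V * nat * nat) :=
  list_prod (list_prod Vl (seq 0 (S m))) (seq 0 (S m)).

Fixpoint sublists {A : Type} (l : list A) : list (list A) :=
  match l with
  | [] => [[]]
  | x :: l => map (cons x) (sublists l) ++ sublists l
  end.

Lemma sublist_of_pred {A : Type} (R : A -> Prop) (l : list A) :
  exists E, In E (sublists l) /\ forall p, In p E <-> In p l /\ R p.
Proof.
  induction l as [|x l [E [HE HEp]]]; simpl.
  - exists []. split; [left; reflexivity|simpl; tauto].
  - destruct (classic (R x)) as [Rx|nRx].
    + exists (x :: E). split; [apply in_or_app; left; apply in_map, HE|].
      intros p. simpl. rewrite HEp. split; [intros [<-|]; tauto|].
      intros [[<-|Hp] Rp]; tauto.
    + exists E. split; [apply in_or_app; right; exact HE|].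
      intros p. rewrite HEp. split; [tauto|]. intros [[<-|Hp] Rp]; tauto.
Qed.

Lemma sig_lt_eq (n : nat) (x y : {k : nat | k < n}) : proj1_sig x = proj1_sig y -> x = y.
Proof. apply eq_sig_hprop. intros k p q. apply le_unique. Qed.

Lemma listing_iso (Vl : list V) (M : structure V) (l : list (carrier M)) (m : nat) :
  (forall a, In a Vl) -> NoDup l -> (forall x, In x l) -> length l = S m ->
  exists E f, In E (sublists (triples Vl m)) /\ iso (graph_structure m E) M f.
Proof.
  intros HVl Hnd Hl Hlen. destruct (carrier_inhabited _ M) as [d].
  destruct (sublist_of_pred (fun '(b, i, j) => rel M b (nth i l d) (nth j l d))
              (triples Vl m)) as [E [HE HEp]].
  exists E, (fun x : {k | k < S m} => nth (proj1_sig x) l d).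
  split; [exact HE|]. split; [|split].
  - intros [i Hi] [j Hj] Heq. apply sig_lt_eq. simpl in *.
    apply (proj1 (NoDup_nth l d) Hnd); [lia|lia|exact Heq].
  - intros x'. destruct (In_nth l x' d (Hl x')) as [i [Hi <-]].
    rewrite Hlen in Hi. exists (exist _ i Hi). reflexivity.
  - intros b [i Hi] [j Hj]. simpl. rewrite HEp. unfold triples.
    rewrite !in_prod_iff, !in_seq. split; [tauto|]. intros H. repeat split; auto; lia.
Qed.

Lemma NoDup_length_or_listing (X : Type) (k : nat) :
  (exists l : list X, NoDup l /\ length l = k) \/
  (exists l : list X, NoDup l /\ (forall x, In x l) /\ length l < k).
Proof.
  induction k as [|k [[l [Hnd Hl]]|[l [Hnd [Hall Hl]]]]].
  - left. exists []. split; [constructor|reflexivity].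
  - destruct (classic (forall x, In x l)) as [Hall|Hall].
    + right. exists l. repeat split; auto. lia.
    + apply not_all_ex_not in Hall as [x Hx].
      left. exists (x :: l). split; [constructor; auto|simpl; lia].
  - right. exists l. repeat split; auto.
Qed.

Lemma small_listing (M : structure V) :
  ~ REL_ge5 M -> exists (l : list (carrier M)) m,
    NoDup l /\ (forall x, In x l) /\ length l = S m /\ m < 4.
Proof.
  intros Hsmall.
  destruct (NoDup_length_or_listing (carrier M) 5) as [[l [Hnd Hl]]|[l [Hnd [Hall Hl]]]].
  - exfalso. apply Hsmall. exists l. auto.
  - destruct (carrier_inhabited _ M) as [d].
    destruct l as [|x l]; [destruct (Hall d)|].
    exists (x :: l), (length l). simpl in *. repeat split; auto. lia.
Qed.

Definition elem_below (m i : nat) : {k : nat | k < S m} :=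
  exist _ (Nat.min i m) (le_n_S _ _ (Nat.le_min_r i m)).

Definition elems (m : nat) : list {k : nat | k < S m} := map (elem_below m) (seq 0 (S m)).

Lemma In_elems (m : nat) (x : {k : nat | k < S m}) : In x (elems m).
Proof.
  destruct x as [k Hk].
  replace (exist _ k Hk) with (elem_below m k).
  - apply in_map, in_seq. lia.
  - apply sig_lt_eq. simpl. lia.
Qed.

Definition small_tests (Vl : list V) : list (term V -> Prop) :=
  flat_map (fun m =>
    flat_map (fun E =>
      flat_map (fun x => map (fun y t => sem (graph_structure m E) t x y) (elems m))
        (elems m))
      (sublists (triples Vl m)))
    (seq 0 4).

Lemma small_tests_sound (Vl : list V) :
  (forall a, In a Vl) ->
  forall t s, agree (small_tests Vl) t s ->
  forall M, ~ REL_ge5 M -> forall x y, sem M t x y <-> sem M s x y.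
Proof.
  intros HVl t s Hag M Hsmall x y.
  destruct (small_listing M Hsmall) as [l [m [Hnd [Hall [Hlen Hm]]]]].
  destruct (listing_iso Vl M l m HVl Hnd Hall Hlen) as [E [f [HE Hf]]].
  pose proof Hf as [_ [Hsurj _]].
  destruct (Hsurj x) as [x0 <-], (Hsurj y) as [y0 <-].
  rewrite <- !(sem_iso _ _ f Hf).
  apply (Hag (fun t => sem (graph_structure m E) t x0 y0)).
  apply in_flat_map. exists m. split; [apply in_seq; lia|].
  apply in_flat_map. exists E. split; [exact HE|].
  apply in_flat_map. exists x0. split; [apply In_elems|].
  apply (in_map (fun y t => sem (graph_structure m E) t x0 y)), In_elems.
Qed.

End Terms.

Theorem lemma4p10 (V : Type) (V_finite : exists l : list V, forall a : V, In a l)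
  (V_nonempty : inhabited V) :
  finite_quotient (@word_ok V) (@wsim_ge5 V) ->
  finite_quotient (fun t : term V => @conv_free V t /\ @vo V t <= 1) (@sim V (@REL V)).
Proof.
  intros [W [_ HW]]. destruct V_finite as [Vl HVl].
  apply (finite_quotient_of_agree _ _
           (map (fun u t => sim REL_ge5 t u) (ge5_reps V Vl W) ++ small_tests V Vl)).
  intros t s [_ Ht] _ Hag M _ x y.
  destruct (classic (REL_ge5 M)) as [Hlarge|Hsmall].
  - assert (Hts : sim REL_ge5 t s).
    { apply (agree_cover _ (fun t => vo t <= 1) (ge5_reps V Vl W)).
      - apply sim_euclid.
      - apply ge5_reps_cover; assumption.
      - exact Ht.
      - eapply agree_app_l; eauto. }
    exact (Hts M Hlarge x y).
  - eapply small_tests_sound; eauto. eapply agree_app_r; eauto.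
Qed.
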